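(* Let $\mathcal{D}$ be a symmetric $2$-$(56,11,2)$ design (biplane), and let $S$ be the set of all $(0,1)$-vectors of Hamming weight $12$ in $L^\perp$, where $L$ is the linear code over $GF(3)$ of length $56$ (coordinates indexed by the blocks of $\mathcal{D}$) spanned by the rows of the points-by-blocks incidence matrix of $\mathcal{D}$. Let $B$ be a block of $\mathcal{D}$ and $\mathcal{D}_B$ the residual design (a $2$-$(45,9,2)$ design with $55$ blocks, indexed by the blocks of $\mathcal{D}$ other than $B$). Let $S_B\subseteq S$ be the set of vectors in $S$ having entry $0$ in the coordinate indexed by $B$. If there exists a quasi-symmetric $2$-$(56,12,9)$ design $\hat{\mathcal{D}}$ with block intersection numbers $0$ and $3$ and a point $z$ of $\hat{\mathcal{D}}$ such that the derived design $\hat{\mathcal{D}}^z$ is isomorphic to the dual design $(\mathcal{D}_B)^*$ (whose points are the $55$ blocks of $\mathcal{D}$ other than $B$), then $S_B$ contains a set of $165$ vectors whose restrictions to the $55$ coordinates other than $B$ are the incidence vectors of the blocks of a $1$-$(55,12,36)$ design (namely $\hat{\mathcal{D}}_z$, transported via this isomorphism) in which any two distinct blocks are either disjoint or meet in exactly $3$ points.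
   Context: A $t$-$(v,k,\lambda)$ design is a pair $(X,\mathcal{B})$ with $|X|=v$ and a collection $\mathcal{B}$ of $k$-subsets (blocks) such that each $t$-subset of points lies in exactly $\lambda$ blocks; symmetric means the number of blocks is $v$, and a biplane is a symmetric design with $\lambda=2$. A $2$-design is quasi-symmetric with intersection numbers $x<y$ if any two distinct blocks meet in exactly $x$ or $y$ points. For a block $B$, the residual design $\mathcal{D}_B$ has point set $X\setminus B$ and blocks $B_j\setminus B$ ($B_j\ne B$). For a point $z$, the derived design $\hat{\mathcal{D}}^z$ has points $X\setminus\{z\}$ and blocks $\{C\setminus\{z\}: z\in C\}$, and the residual design $\hat{\mathcal{D}}_z$ has points $X\setminus\{z\}$ and blocks $\{C: z\notin C\}$. The dual design swaps the roles of points and blocks, keeping incidence. Code duals are with respect to the standard inner product over $GF(3)$. *)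

From HB Require Import structures.
From mathcomp Require Import all_boot all_order all_algebra.
Set Implicit Arguments. Unset Strict Implicit. Unset Printing Implicit Defensive.
Import GRing.Theory.
Local Open Scope ring_scope.

(* A symmetric 2-(56,11,2) design (biplane): points P, blocks Bk (abstract
   index types, so repeated blocks are not a priori excluded), incidence inc. *)
Definition biplane_56_11_2 (P Bk : finType) (inc : P -> Bk -> bool) : Prop :=
  [/\ #|P| = 56%N, #|Bk| = 56%N,
      (forall c : Bk, #|[set p | inc p c]| = 11%N) &
      (forall p q : P, p != q -> #|[set c | inc p c && inc q c]| = 2%N)].

Definition inc_row (P Bk : finType) (inc : P -> Bk -> bool) (p : P)
  : {ffun Bk -> 'F_3} := [ffun c => (inc p c)%:R].

Definition dotF3 (Bk : finType) (x y : {ffun Bk -> 'F_3}) : 'F_3 :=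
  \sum_(c : Bk) x c * y c.

Definition in_L (P Bk : finType) (inc : P -> Bk -> bool) (y : {ffun Bk -> 'F_3})
  : Prop :=
  exists a : {ffun P -> 'F_3},
    forall c : Bk, y c = \sum_(p : P) a p * inc_row inc p c.

Definition in_Lperp (P Bk : finType) (inc : P -> Bk -> bool) (x : {ffun Bk -> 'F_3})
  : Prop := forall y, in_L inc y -> dotF3 x y = 0.

Definition in_S (P Bk : finType) (inc : P -> Bk -> bool) (x : {ffun Bk -> 'F_3})
  : Prop :=
  [/\ (forall c, (x c == 0) || (x c == 1)),
      #|[set c | x c != 0]| = 12%N &
      in_Lperp inc x].

Definition in_SB (P Bk : finType) (inc : P -> Bk -> bool) (B : Bk)
  (x : {ffun Bk -> 'F_3}) : Prop := in_S inc x /\ x B = 0.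

(* A quasi-symmetric 2-(56,12,9) design with intersection numbers 0 and 3,
   with blocks given as a set of subsets of the point set Ph. (Repeated blocks
   would meet in 12 points, so a set of blocks loses nothing.) *)
Definition qs_design_56_12_9 (Ph : finType) (Bh : {set {set Ph}}) : Prop :=
  [/\ #|Ph| = 56%N,
      (forall C, C \in Bh -> #|C| = 12%N),
      (forall p q : Ph, p != q -> #|[set C in Bh | (p \in C) && (q \in C)]| = 9%N) &
      (forall C D, C \in Bh -> D \in Bh -> C != D ->
          (#|C :&: D| == 0%N) || (#|C :&: D| == 3%N))].

Definition derived_blocks (Ph : finType) (Bh : {set {set Ph}}) (z : Ph)
  : {set {set Ph}} := [set C :\ z | C in [set C in Bh | z \in C]].

Definition residual_pt_blocks (Ph : finType) (Bh : {set {set Ph}}) (z : Ph)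
  : {set {set Ph}} := [set C in Bh | z \notin C].

(* blocks of the dual (D_B)^* of the residual design D_B: its points are the
   blocks c <> B of D, and there is one block per point p of D_B (p not in B),
   namely the set of blocks c <> B with p in c \ B. *)
Definition dual_residual_blocks (P Bk : finType) (inc : P -> Bk -> bool) (B : Bk)
  : {set {set Bk}} :=
  [set [set c | (c != B) && inc p c] | p in [set p | ~~ inc p B]].

Definition iso_derived_dual (P Bk Ph : finType) (inc : P -> Bk -> bool) (B : Bk)
  (Bh : {set {set Ph}}) (z : Ph) (f : Ph -> Bk) : Prop :=
  [/\ {in [set~ z] &, injective f},
      f @: [set~ z] = [set~ B] &
      [set f @: C | C : {set Ph} in derived_blocks Bh z] = dual_residual_blocks inc B].

From HB Require Import structures.
From mathcomp Require Import all_boot all_order all_algebra.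
From mathcomp Require Import zify.
Import GRing.Theory.
Set Implicit Arguments. Unset Strict Implicit.

(* Take for the vectors the incidence vectors of the sets X = f(C), C a block
   of the quasi-symmetric design missing z; X is a set of 12 blocks of D other
   than B, and its incidence vector lies in L^perp iff every point p of D lies on
   a multiple of 3 blocks of X.  If p is not on B, the blocks other than B through
   p form f(E \ z) for a block E through z, so p lies on |C :&: E| in {0, 3}
   blocks of X.  If p is on B, summing over the points of any block c0 gives
   sum_(c in X) |c :&: c0| = 2 |X| (mod 3), because two blocks of a biplane meet
   in 2 points and 11 = 2 (mod 3).  For c0 the second block through two points
   u, v of B, which meets B exactly in {u, v}, the counts at u and v thus add up
   to 0 mod 3, and three points of B force them all to vanish.  The cardinalities
   165 and 36 are b - r = 210 - 45 and r - lambda = 45 - 9 for the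
   quasi-symmetric design. *)

Lemma card_set_sum (T : finType) (Q : pred T) : #|[set x | Q x]| = \sum_x Q x.
Proof.
rewrite -sum1_card big_mkcond /=; apply: eq_bigr => x _.
by rewrite inE; case: (Q x).
Qed.

Lemma card_ordered_pairs (T : finType) (A : {set T}) :
  \sum_p \sum_q [&& p != q, p \in A & q \in A] = #|A| * #|A|.-1.
Proof.
rewrite -sum_nat_const [RHS]big_mkcond /=; apply: eq_bigr => p _.
case: (boolP (p \in A)) => pA; last by rewrite big1 // => q _; rewrite andbF.
rewrite (cardsD1 p) pA /= card_set_sum.
by apply: eq_bigr => q _; rewrite !inE eq_sym.
Qed.

Section IncidenceCounting.

Variables (P Bk : finType) (inc : P -> Bk -> bool) (A : {pred Bk}) (k : nat).
Hypothesis block_size : forall c, c \in A -> #|[set q | inc q c]| = k.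

Lemma replication_count (lam : nat) (p : P) :
  (forall q, q != p -> #|[set c in A | inc p c && inc q c]| = lam) ->
  #|[set c in A | inc p c]| * k.-1 = lam * #|P|.-1.
Proof.
move=> pair_count.
(* both sides count the pairs (q, c) with q != p and p, q on c *)
pose N := \sum_q \sum_(c in A) [&& q != p, inc p c & inc q c].
transitivity N.
  rewrite /N exchange_big card_set_sum big_distrl [RHS]big_mkcond /=.
  apply: eq_bigr => c _; case: (boolP (c \in A)) => cA //.
  case: (boolP (inc p c)) => pc /=; last by rewrite big1 // => q _; rewrite andbF.
  rewrite mul1n -(block_size cA) (cardsD1 p) inE pc /= card_set_sum.
  by apply: eq_bigr => q _; rewrite !inE.
rewrite -(cardsC1 p) card_set_sum mulnC big_distrl /=; apply: eq_bigr => q _.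
case: eqP => [->|/eqP qp]; first by rewrite big1 // !inE eqxx.
rewrite !inE qp mul1n -(pair_count _ qp) card_set_sum big_mkcond.
by apply: eq_bigr => c _; case: (c \in A).
Qed.

Lemma block_count (r : nat) :
  (forall p, #|[set c in A | inc p c]| = r) -> #|A| * k = #|P| * r.
Proof.
move=> replication.
transitivity (\sum_(c in A) \sum_p inc p c).
  by rewrite -sum_nat_const; apply: eq_bigr => c cA; rewrite -card_set_sum block_size.
rewrite exchange_big -sum_nat_const /=; apply: eq_bigr => p _.
rewrite -(replication p) card_set_sum big_mkcond.
by apply: eq_bigr => c _; case: (c \in A).
Qed.

End IncidenceCounting.

Section SymmetricDesign.

Variables (P Bk : finType) (inc : P -> Bk -> bool) (k lam : nat).
Hypotheses (block_size : forall c, #|[set p | inc p c]| = k)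
  (pair_count : forall p q, p != q -> #|[set c | inc p c && inc q c]| = lam)
  (square : #|Bk| = #|P|) (k_gt1 : 1 < k) (sym_params : lam * #|P|.-1 = k * k.-1).

Local Notation meet c c0 := #|[set p | inc p c && inc p c0]|.

Lemma sym_replication p : #|[set c | inc p c]| = k.
Proof.
have pair_count_p q : q != p -> #|[set c in predT | inc p c && inc q c]| = lam.
  by move=> qp; apply: pair_count; rewrite eq_sym.
have /eqP := replication_count (fun c _ => block_size c) pair_count_p.
by rewrite sym_params eqn_pmul2r ?ltn_predRL // => /eqP.
Qed.

Lemma sum_meet c0 : \sum_(c | c != c0) meet c c0 = k * k.-1.
Proof.
under eq_bigr do rewrite card_set_sum.
rewrite exchange_big -{1}(block_size c0) -sum_nat_const [RHS]big_mkcond /=.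
apply: eq_bigr => p _; rewrite inE.
case: (boolP (inc p c0)) => pc0; last by rewrite big1 // => c _; rewrite andbF.
rewrite -(sym_replication p) (cardsD1 c0) inE pc0 /= card_set_sum big_mkcond /=.
by rewrite add0n; apply: eq_bigr => c _; rewrite !inE andbT; case: (c != c0).
Qed.

Lemma sum_meet_pairs c0 :
  \sum_(c | c != c0) meet c c0 * (meet c c0).-1 = k * k.-1 * lam.-1.
Proof.
under eq_bigr do rewrite -card_ordered_pairs.
rewrite exchange_big -{1 2}(block_size c0) -card_ordered_pairs big_distrl /=.
apply: eq_bigr => p _; rewrite exchange_big big_distrl /=; apply: eq_bigr => q _.
rewrite !inE; case: (boolP [&& p != q, inc p c0 & inc q c0]) => [/and3P[pq pc0 qc0]|pq0].
  rewrite mul1n -(pair_count pq) (cardsD1 c0) inE pc0 qc0 /= card_set_sum big_mkcond /=.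
  by rewrite add0n; apply: eq_bigr => c _; rewrite !inE pq pc0 qc0 !andbT; case: (c != c0).
rewrite big1 // => c _; apply/eqP; rewrite eqb0; apply: contra pq0.
by rewrite !inE => /and3P[-> /andP[_ ->] /andP[_ ->]].
Qed.

Lemma sym_meet c c0 : c != c0 -> meet c c0 = lam.
Proof.
move=> cc0.
have lam_gt0 : 0 < lam.
  have : 0 < k * k.-1 by rewrite muln_gt0 ltn_predRL k_gt1 ltnW.
  by rewrite -sym_params muln_gt0 => /andP[].
(* [d x = |meet x c0 - lam|]; the first two moments of [meet _ c0] computed
   above force [\sum_(x | x != c0) d x ^ 2 = 0]. *)
pose d x := (meet x c0 - lam) + (lam - meet x c0).
have d_sq x : d x ^ 2 + 2 * lam * meet x c0
              = meet x c0 * (meet x c0).-1 + meet x c0 + lam ^ 2.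
  by rewrite /d; case: (meet x c0) => [|m]; nia.
have sum_d : \sum_(x | x != c0) d x ^ 2 = 0.
  have : \sum_(x | x != c0) (d x ^ 2 + 2 * lam * meet x c0)
         = \sum_(x | x != c0) (meet x c0 * (meet x c0).-1 + meet x c0 + lam ^ 2).
    by apply: eq_bigr => x _; apply: d_sq.
  rewrite !big_split /= -!big_distrr /= sum_meet sum_meet_pairs.
  have -> : \sum_(x | x != c0) lam = #|P|.-1 * lam.
    by rewrite -square -(cardsC1 c0) -sum_nat_const; apply: eq_bigl => x; rewrite !inE.
  by rewrite -sym_params; case: (lam) lam_gt0 => // l _; nia.
move/eqP: sum_d; rewrite sum_nat_eq0 => /forallP/(_ c)/implyP/(_ cc0)/eqP.
by rewrite /d; lia.
Qed.

End SymmetricDesign.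

Definition incidence_vector (Bk : finType) (X : {set Bk}) : {ffun Bk -> 'F_3} :=
  [ffun c => (c \in X)%:R]%R.

Section IncidenceVector.

Variable Bk : finType.
Local Open Scope ring_scope.
Implicit Types (X : {set Bk}) (B c : Bk).

Lemma incidence_vector_inj : injective (@incidence_vector Bk).
Proof.
move=> X Y /ffunP eqXY; apply/setP => c; move: (eqXY c); rewrite !ffunE.
by case: (c \in X); case: (c \in Y) => // /eqP; rewrite ?oner_eq0 // eq_sym oner_eq0.
Qed.

Lemma incidence_vector01 X c : (incidence_vector X c == 0) || (incidence_vector X c == 1).
Proof. by rewrite ffunE; case: (c \in X); rewrite eqxx ?orbT. Qed.

Lemma incidence_vector_weight X : #|[set c | incidence_vector X c != 0]| = #|X|.
Proof. by apply: eq_card => c; rewrite inE ffunE; case: (c \in X); rewrite ?oner_eq0 ?eqxx. Qed.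

Lemma incidence_vector_support X B : X \subset [set~ B] ->
  [set c | (c != B) && (incidence_vector X c == 1)] = X.
Proof.
move=> /subsetP XB; apply/setP => c; rewrite !inE ffunE.
case: (boolP (c \in X)) => [/XB|_]; rewrite ?mulr1n ?mulr0n.
  by rewrite !inE eqxx andbT.
by rewrite [_ == 1]eq_sym oner_eq0 andbF.
Qed.

End IncidenceVector.

Section OrthogonalToRows.

Variables (P Bk : finType) (inc : P -> Bk -> bool).
Local Open Scope ring_scope.

Lemma in_Lperp_rows x : (forall p, dotF3 x (inc_row inc p) = 0) -> in_Lperp inc x.
Proof.
move=> x_perp y [a y_def]; rewrite /dotF3.
under eq_bigr do rewrite y_def big_distrr /=.
rewrite exchange_big big1 // => p _.
transitivity (a p * dotF3 x (inc_row inc p)); last by rewrite x_perp mulr0.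
by rewrite /dotF3 big_distrr; apply: eq_bigr => c _; rewrite mulrCA.
Qed.

Lemma dotF3_incidence_row (X : {set Bk}) p :
  dotF3 (incidence_vector X) (inc_row inc p) = #|[set c in X | inc p c]|%:R.
Proof.
rewrite card_set_sum natr_sum; apply: eq_bigr => c _.
by rewrite !ffunE; case: (c \in X); case: (inc p c); rewrite ?mulr1 ?mulr0.
Qed.

Lemma incidence_vector_Lperp (X : {set Bk}) :
  (forall p, (3 %| #|[set c in X | inc p c]|)%N) -> in_Lperp inc (incidence_vector X).
Proof.
move=> X_dvd; apply: in_Lperp_rows => p; rewrite dotF3_incidence_row; apply/eqP.
by rewrite -(dvdn_pcharf (pchar_Fp (isT : prime 3))).
Qed.

End OrthogonalToRows.

Section Biplane.

Variables (P Bk : finType) (inc : P -> Bk -> bool).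
Hypothesis biplane : biplane_56_11_2 inc.

Local Notation hits X q := #|[set c in X | inc q c]|.

Lemma biplane_meet c c0 : c != c0 -> #|[set p | inc p c && inc p c0]| = 2.
Proof.
case: biplane => cardP cardBk block_size pair_count.
by apply: (sym_meet block_size pair_count); rewrite ?cardP ?cardBk.
Qed.

Lemma biplane_second_block B p a : inc p B -> inc a B -> p != a ->
  exists2 c0, c0 != B & [set q | inc q c0 && inc q B] = [set p; a].
Proof.
move=> pB aB pa; case: biplane => _ _ _ /(_ p a pa).
rewrite (cardsD1 B) inE pB aB add1n => -[] /eqP /cards1P[c0 blocks_pa].
have : c0 \in [set c | inc p c && inc a c] :\ B by rewrite blocks_pa set11.
rewrite !inE => /and3P[c0B pc0 ac0]; exists c0 => //.
apply/esym/eqP; rewrite eqEcard biplane_meet // cards2 pa andbT.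
by apply/subsetP => q; rewrite !inE => /orP[] /eqP ->; rewrite ?pc0 ?ac0.
Qed.

Lemma biplane_block_sum (X : {set Bk}) c0 :
  \sum_(q | inc q c0) hits X q = 2 * #|X| + 9 * (c0 \in X).
Proof.
case: biplane => _ _ block_size _.
under eq_bigr do rewrite card_set_sum.
rewrite exchange_big /=.
transitivity (\sum_(c in X) (2 + 9 * (c == c0))).
  rewrite [RHS]big_mkcond; apply: eq_bigr => c _.
  case: (boolP (c \in X)) => cX /=; last by rewrite big1.
  transitivity #|[set q | inc q c && inc q c0]|.
    rewrite card_set_sum big_mkcond; apply: eq_bigr => q _.
    by case: (inc q c0); rewrite ?andbT ?andbF.
  case: eqP => [->|/eqP cc0]; last by rewrite biplane_meet.
  by rewrite (eq_card (B := [set q | inc q c0])) ?block_size // => q; rewrite !inE andbb.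
rewrite big_split sum_nat_const -big_distrr mulnC /=; congr (_ + 9 * _).
case: (boolP (c0 \in X)) => c0X /=; last by rewrite big1 // => c cX; case: eqP c0X => // <-; rewrite cX.
by rewrite (bigD1 c0) //= eqxx big1 // => c /andP[_ /negbTE ->].
Qed.

Lemma biplane_pair_hits_dvd (X : {set Bk}) B u v :
  3 %| #|X| -> (forall q, ~~ inc q B -> 3 %| hits X q) ->
  inc u B -> inc v B -> u != v -> 3 %| hits X u + hits X v.
Proof.
move=> X_dvd out_dvd uB vB uv.
have [c0 c0B meet_c0B] := biplane_second_block uB vB uv.
have := biplane_block_sum X c0; rewrite (bigID (fun q => inc q B)) /=.
rewrite (eq_bigl (fun q => q \in [set u; v])) => [|q]; last by rewrite -meet_c0B inE.
rewrite big_setU1 ?inE //= big_set1.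
have : 3 %| \sum_(q | inc q c0 && ~~ inc q B) hits X q.
  by apply: dvdn_sum => q /andP[_ /out_dvd].
lia.
Qed.

Lemma biplane_hits_dvd (X : {set Bk}) B :
  3 %| #|X| -> (forall q, ~~ inc q B -> 3 %| hits X q) -> forall p, 3 %| hits X p.
Proof.
move=> X_dvd out_dvd p; case: (boolP (inc p B)) => pB; last exact: out_dvd.
have : 1 < #|[set q | inc q B] :\ p|.
  by case: biplane => _ _ /(_ B) + _; rewrite (cardsD1 p) inE pB add1n => -[->].
case/card_gt1P => a [b]; rewrite !inE => -[/andP[ap aB] /andP[bp bB] ab].
have := biplane_pair_hits_dvd X_dvd out_dvd pB aB; rewrite eq_sym => /(_ ap).
have := biplane_pair_hits_dvd X_dvd out_dvd pB bB; rewrite eq_sym => /(_ bp).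
have := biplane_pair_hits_dvd X_dvd out_dvd aB bB ab.
lia.
Qed.

End Biplane.

Section QuasiSymmetric.

Variables (Ph : finType) (Bh : {set {set Ph}}).
Hypothesis qs : qs_design_56_12_9 Bh.

Lemma qs_block_size C : C \in Bh -> #|[set q | q \in C]| = 12.
Proof. by case: qs => _ block_size _ _ /block_size <-; apply: eq_card => q; rewrite inE. Qed.

Lemma qs_replication y : #|[set C in Bh | y \in C]| = 45.
Proof.
case: qs => cardPh _ pair_count _.
have pair_count_y q : q != y -> #|[set C in Bh | (y \in C) && (q \in C)]| = 9.
  by move=> qy; apply: pair_count; rewrite eq_sym.
have := replication_count (inc := fun (q : Ph) (C : {set Ph}) => q \in C) (A := Bh)
  qs_block_size pair_count_y.
by rewrite cardPh => /(congr1 (divn^~ 11)); rewrite mulnK.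
Qed.

Lemma qs_card : #|Bh| = 210.
Proof.
case: qs => cardPh _ _ _.
have := block_count (inc := fun (q : Ph) (C : {set Ph}) => q \in C) (A := Bh)
  qs_block_size qs_replication.
by rewrite cardPh => /(congr1 (divn^~ 12)); rewrite mulnK.
Qed.

Lemma qs_residual_card z : #|residual_pt_blocks Bh z| = 165.
Proof.
have := cardsID [set C : {set Ph} | z \in C] Bh; rewrite qs_card.
have -> : Bh :&: [set C : {set Ph} | z \in C] = [set C in Bh | z \in C] by apply/setP => C; rewrite !inE.
have -> : Bh :\: [set C : {set Ph} | z \in C] = residual_pt_blocks Bh z by apply/setP => C; rewrite !inE andbC.
by rewrite qs_replication => /(congr1 (subn^~ 45)); rewrite addKn.
Qed.

Lemma qs_residual_replication z y : y != z ->
  #|[set C in residual_pt_blocks Bh z | y \in C]| = 36.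
Proof.
move=> yz; case: qs => _ _ pair_count _.
have := cardsID [set C : {set Ph} | z \in C] [set C in Bh | y \in C]; rewrite qs_replication.
have -> : [set C in Bh | y \in C] :&: [set C : {set Ph} | z \in C]
          = [set C in Bh | (y \in C) && (z \in C)] by apply/setP => C; rewrite !inE andbA.
have -> : [set C in Bh | y \in C] :\: [set C : {set Ph} | z \in C]
          = [set C in residual_pt_blocks Bh z | y \in C].
  by apply/setP => C; rewrite !inE andbCA andbA.
by rewrite pair_count // => /(congr1 (subn^~ 9)); rewrite addKn.
Qed.

End QuasiSymmetric.


Section Transport.

Variables (P Bk : finType) (inc : P -> Bk -> bool) (B : Bk).
Variables (Ph : finType) (Bh : {set {set Ph}}) (z : Ph) (f : Ph -> Bk).
Hypothesis iso : iso_derived_dual inc B Bh z f.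
Implicit Types (C D : {set Ph}) (y : Ph).

Local Notation Res := (residual_pt_blocks Bh z).

Lemma residual_subC1 C : C \in Res -> C \subset [set~ z].
Proof. by rewrite inE => /andP[_ zC]; apply/subsetP => y yC; rewrite !inE; apply: contraNneq zC => <-. Qed.

Lemma iso_image_subC1 C : C \subset [set~ z] -> f @: C \subset [set~ B].
Proof. by case: iso => _ <- _; apply: imsetS. Qed.

Lemma iso_inj_in C : C \subset [set~ z] -> {in C &, injective f}.
Proof. by case: iso => f_inj _ _ /subsetP Cz x y /Cz xz /Cz yz; apply: f_inj. Qed.

Lemma card_iso_image C : C \subset [set~ z] -> #|f @: C| = #|C|.
Proof. by move/iso_inj_in/card_in_imset. Qed.

Lemma mem_iso_image C y : C \subset [set~ z] -> y != z -> (f y \in f @: C) = (y \in C).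
Proof.
move=> /subsetP Cz yz; apply/imsetP/idP => [[x xC fyx]|]; last by exists y.
case: iso => f_inj _ _; suff -> : y = x by [].
by apply: f_inj; [rewrite !inE | exact: Cz | ].
Qed.

Lemma card_iso_image_meet C D : C \subset [set~ z] ->
  #|f @: C :&: f @: (D :\ z)| = #|C :&: D|.
Proof.
move=> Cz; have Dz : D :\ z \subset [set~ z] by apply/subsetP => y; rewrite !inE => /andP[].
have zC : z \notin C by apply/negP => /(subsetP Cz); rewrite !inE eqxx.
rewrite -imsetI; last by case: iso => f_inj _ _ x y /(subsetP Cz) + /(subsetP Dz); apply: f_inj.
rewrite card_iso_image; last by rewrite subIset ?Cz.
by apply: eq_card => y; rewrite !inE; case: eqP => [->|_]; rewrite ?(negbTE zC).
Qed.

Lemma iso_image_inj : {in Res &, injective (fun C => f @: C)}.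
Proof.
move=> C D CR DR eqCD; apply/setP => y; case: (eqVneq y z) => [->|yz].
  by move: CR DR; rewrite !inE => /andP[_ /negbTE ->] /andP[_ /negbTE ->].
by rewrite -(mem_iso_image (residual_subC1 CR) yz) -(mem_iso_image (residual_subC1 DR) yz) eqCD.
Qed.

Lemma dual_block_iso_image p : ~~ inc p B ->
  exists2 E, (E \in Bh) && (z \in E) & [set c | (c != B) && inc p c] = f @: (E :\ z).
Proof.
move=> pB; case: iso => _ _ blocks.
have : [set c | (c != B) && inc p c] \in dual_residual_blocks inc B.
  by apply/imsetP; exists p; rewrite ?inE.
by rewrite -blocks => /imsetP[_ /imsetP[E + ->] ->]; rewrite inE; exists E.
Qed.

Hypothesis qs : qs_design_56_12_9 Bh.

Lemma card_residual_iso_image C : C \in Res -> #|f @: C| = 12.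
Proof.
move=> CR; rewrite card_iso_image ?residual_subC1 //.
by case: qs => _ -> //; move: CR; rewrite inE => /andP[].
Qed.

Lemma residual_image_hits_dvd C p : C \in Res -> ~~ inc p B ->
  3 %| #|[set c in f @: C | inc p c]|.
Proof.
move=> CR pB; have [E /andP[EB zE] blocks_p] := dual_block_iso_image pB.
have Cz := residual_subC1 CR.
have -> : [set c in f @: C | inc p c] = f @: C :&: f @: (E :\ z).
  rewrite -blocks_p; apply/setP => c; rewrite !inE.
  by case: (boolP (c \in f @: C)) => //= /(subsetP (iso_image_subC1 Cz)); rewrite !inE => ->.
rewrite card_iso_image_meet //; move: CR; rewrite inE => /andP[CB zC].
have CE : C != E by apply: contraNneq zC => ->.
by case: qs => _ _ _ /(_ C E CB EB CE) /orP[] /eqP ->.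
Qed.

Lemma residual_image_meet C D : C \in Res -> D \in Res -> C != D ->
  (#|f @: C :&: f @: D| == 0) || (#|f @: C :&: f @: D| == 3).
Proof.
move=> CR DR CD; move: (CR) (DR); rewrite !inE => /andP[CB _] /andP[DB zD].
have -> : D = D :\ z by apply/esym/setDidPl; rewrite disjoint_sym disjoints1.
rewrite card_iso_image_meet ?residual_subC1 //.
by case: qs => _ _ _; apply.
Qed.

Lemma residual_image_replication c : c != B ->
  #|[set s in [set f @: C | C : {set Ph} in Res] | c \in s]| = 36.
Proof.
move=> cB; have : c \in f @: [set~ z] by case: iso => _ -> _; rewrite !inE.
case/imsetP => y; rewrite !inE => yz ->.
have -> : [set s in [set f @: C | C : {set Ph} in Res] | f y \in s]
          = [set f @: C | C : {set Ph} in [set C in Res | y \in C]].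
  apply/setP => s; apply/idP/imsetP.
    rewrite inE => /andP[/imsetP[C CR ->]]; rewrite mem_iso_image ?residual_subC1 // => yC.
    by exists C; rewrite // inE CR.
  case=> C /setIdP[CR yC] ->.
  by rewrite inE imset_f //= andbT imset_f.
rewrite card_in_imset ?qs_residual_replication // => C D /setIdP[CR _] /setIdP[DR _].
exact: iso_image_inj.
Qed.

Hypothesis biplane : biplane_56_11_2 inc.

Lemma residual_vector_SB C : C \in Res -> in_SB inc B (incidence_vector (f @: C)).
Proof.
move=> CR; split; first split.
- exact: incidence_vector01.
- by rewrite incidence_vector_weight card_residual_iso_image.
- apply: incidence_vector_Lperp; apply: (biplane_hits_dvd biplane (B := B)).
    by rewrite card_residual_iso_image.
  by move=> q; apply: residual_image_hits_dvd.
- rewrite ffunE; case: (boolP (B \in f @: C)) => //.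
  by move/(subsetP (iso_image_subC1 (residual_subC1 CR))); rewrite !inE eqxx.
Qed.

End Transport.

Local Open Scope ring_scope.

Theorem lemma3 (P Bk : finType) (inc : P -> Bk -> bool) (B : Bk)
  (Ph : finType) (Bh : {set {set Ph}}) (z : Ph) (f : Ph -> Bk) :
  biplane_56_11_2 inc ->
  qs_design_56_12_9 Bh ->
  iso_derived_dual inc B Bh z f ->
  exists T : {set {ffun Bk -> 'F_3}},
    let R := [set [set c | (c != B) && (x c == 1)] | x : {ffun Bk -> 'F_3} in T] in
    [/\ (forall x, x \in T -> in_SB inc B x),
        #|T| = 165%N &
        #|R| = 165%N] /\
    [/\ R = [set f @: C | C : {set Ph} in residual_pt_blocks Bh z],
        (forall s, s \in R -> #|s| = 12%N),
        (forall c, c != B -> #|[set s in R | c \in s]| = 36%N) &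
        (forall s t, s \in R -> t \in R -> s != t ->
            (#|s :&: t| == 0%N) || (#|s :&: t| == 3%N))].
Proof.
move=> biplane qs iso; set Res := residual_pt_blocks Bh z.
exists [set incidence_vector (f @: C) | C : {set Ph} in Res] => /=.
rewrite -imset_comp (eq_in_imset (g := fun C : {set Ph} => f @: C)); last first.
  move=> C CR; apply/incidence_vector_support; apply: (iso_image_subC1 iso).
  exact: residual_subC1 CR.
split; split.
- by move=> _ /imsetP[C CR ->]; apply: (residual_vector_SB iso qs biplane).
- rewrite card_in_imset ?(qs_residual_card qs) // => C D CR DR /incidence_vector_inj.
  exact: (iso_image_inj iso).
- by rewrite card_in_imset ?(qs_residual_card qs) //; apply: (iso_image_inj iso).
- by [].
- by move=> _ /imsetP[C CR ->]; apply: (card_residual_iso_image iso qs).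
- exact: (residual_image_replication iso qs).
- move=> _ _ /imsetP[C CR ->] /imsetP[D DR ->] CD.
  by apply: (residual_image_meet iso qs) => //; apply: contraNneq CD => ->.
Qed.
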